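(* Let $a>1$ be an integer that is a zero divisor in $\mathbb{Z}/m\mathbb{Z}$, let $k\ge1$ with $a^k\mid m$, and let $(K_n,\alpha)$ be an edge-labeled complete graph over $\mathbb{Z}/m\mathbb{Z}$ with ordered edge labels $a^{i_1},\dots,a^{i_{r_n}}$ such that either $a^{i_{r_n}}\mid a^{i_{r_n-1}}\mid\cdots\mid a^{i_1}\mid a^k$ with $i_{r_n}\ge1$ and $i_1<k$, or $a^{i_1}\mid a^{i_2}\mid\cdots\mid a^{i_{r_n}}\mid a^k$ with $i_1\ge1$ and $i_{r_n}<k$. Then for every connected spanning subgraph $H$ of $K_n$, equipped with the restriction of $\alpha$ to its edges, $\operatorname{rk}[\mathbb{Z}/m\mathbb{Z}]_{(H,\alpha)}=n$.
   Context: A spline on an edge-labeled graph $(G,\alpha)$ over $\mathbb{Z}/m\mathbb{Z}$ (edges labeled by nonzero ideals) is a vector $(f_{v_1},\dots,f_{v_n})\in(\mathbb{Z}/m\mathbb{Z})^n$ with $f_{v_i}-f_{v_j}\in\alpha(v_iv_j)$ for every edge; the splines form a $\mathbb{Z}$-module $[\mathbb{Z}/m\mathbb{Z}]_{(G,\alpha)}$, whose rank $\operatorname{rk}$ is the smallest size of a generating set. $K_n$ is the complete graph on $v_1,\dots,v_n$; $r_k=k(k-1)/2$; for $1\le j<k\le n$ the edge $v_jv_k$ is $e_{r_{k-1}+j}$. ''Ordered edge labels $l_1,\dots,l_{r_n}$'' means $\alpha(e_s)$ is the ideal generated by $l_s+m\mathbb{Z}$. *)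

From mathcomp Require Import all_boot all_order all_algebra.
Set Implicit Arguments. Unset Strict Implicit. Unset Printing Implicit Defensive.
Import GRing.Theory Num.Theory.
From mathcomp Require Import intdiv.

(* Elements of Z/mZ are represented by integer representatives; two
   representatives are equal in Z/mZ iff m divides their difference. *)

Definition zero_divisor_mod (m a : nat) : Prop :=
  a %% m != 0 /\ exists b : nat, b %% m != 0 /\ (a * b) %% m = 0.

Definition r (k : nat) : nat := (k * (k - 1)) %/ 2.

(* With 0-based vertices u < v (i.e. v_{u+1} v_{v+1} in the paper), the edge
   v_{u+1} v_{v+1} is e_{r_v + u + 1}. *)
Definition edge_index (u v : nat) : nat := r v + u + 1.

(* A spanning subgraph H of K_n is given by its edge set: E u v for u < v
   means the edge v_{u+1}v_{v+1} is in H (values of E u v with u >= v are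
   irrelevant). *)
Definition hadj n (E : 'I_n -> 'I_n -> bool) : rel 'I_n :=
  fun u v => ((u < v) && E u v) || ((v < u) && E v u).

Definition connected_subgraph n (E : 'I_n -> 'I_n -> bool) : Prop :=
  forall u v : 'I_n, connect (hadj E) u v.

(* f is a spline on (H, alpha) over Z/mZ, where the edge e_s carries the
   ideal of Z/mZ generated by a^(i s) + mZ. *)
Definition is_spline (m a : nat) (i : nat -> nat) n
    (E : 'I_n -> 'I_n -> bool) (f : 'I_n -> int) : Prop :=
  forall u v : 'I_n, (u < v)%N -> E u v ->
    exists c : int, (m%:Z %| (f u - f v - c * (a ^ i (edge_index u v))%:Z)%R)%Z.

Definition generates (m a : nat) (i : nat -> nat) n
    (E : 'I_n -> 'I_n -> bool) k (g : 'I_k -> 'I_n -> int) : Prop :=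
  (forall j, is_spline m a i E (g j)) /\
  forall f, is_spline m a i E f ->
    exists c : 'I_k -> int,
      forall v : 'I_n, (m%:Z %| (f v - \sum_(j < k) c j * g j v)%R)%Z.

Definition spline_rank_is (m a : nat) (i : nat -> nat) n
    (E : 'I_n -> 'I_n -> bool) (q : nat) : Prop :=
  (exists g : 'I_q -> 'I_n -> int, generates m a i E g) /\
  (forall k (g : 'I_k -> 'I_n -> int), generates m a i E g -> (q <= k)%N).

From mathcomp Require Import all_boot all_order all_algebra.
From mathcomp Require Import intdiv ring.
From Stdlib Require Import Classical.
Set Implicit Arguments. Unset Strict Implicit. Unset Printing Implicit Defensive.
Import GRing.Theory.

(* Read on integer representatives, the splines form a subgroup of Z^n containing m Z^n,
   and every subgroup of Z^n is generated by n elements (an echelon basis whose pivots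
   are found by Euclid's algorithm), so the rank is at most n.  Conversely, every edge
   exponent is below k, so every label divides M = m / a and the vectors M e_v are
   splines.  Expressing them modulo m = M a through k generators gives integer matrices
   with C G = M (1 - a H); as det (1 - a H) = 1 mod a, the product C G is invertible
   over Q, whence k >= n. *)

Local Open Scope ring_scope.

Section Pivot.
Variables (n : nat) (S : 'rV[int]_n -> Prop) (j : 'I_n).
Hypothesis S_lin : forall (z : int) x y, S x -> S y -> S (z *: x + y).

Lemma pivot_descent d x : S x -> x ord0 j != 0 -> `|x ord0 j|%N = d ->
  exists2 x0, S x0 & forall y, S y -> (x0 ord0 j %| y ord0 j)%Z.
Proof.
elim/ltn_ind: d x => d IH x Sx xj_neq0 xj_abs.
case: (classic (forall y, S y -> (x ord0 j %| y ord0 j)%Z)) => [|/not_all_ex_not[y]].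
  by exists x.
move=> /(@imply_to_and (S y)) [Sy /negP y_ndvd].
pose q := (y ord0 j %/ x ord0 j)%Z.
have Sy' : S (- q *: x + y) by exact: S_lin.
have y'j : (- q *: x + y) ord0 j = (y ord0 j %% x ord0 j)%Z.
  by rewrite !mxE /modz mulNr addrC.
apply: (IH _ _ _ Sy'); last by [].
- by rewrite -xj_abs -ltz_nat y'j gez0_abs ?modz_ge0 ?ltz_mod.
- by rewrite y'j; apply: contra y_ndvd => /eqP /dvdz_mod0P.
Qed.

Lemma pivot_exists : S 0 ->
  exists2 x0, S x0 & forall y, S y -> (x0 ord0 j %| y ord0 j)%Z.
Proof.
move=> S0; case: (classic (exists2 x, S x & x ord0 j != 0)) => [[x Sx xj_neq0]|none].
  exact: pivot_descent Sx xj_neq0 erefl.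
exists 0 => // y Sy; rewrite mxE dvd0z; apply/negPn/negP => yj_neq0.
by apply: none; exists y.
Qed.

End Pivot.

Definition vanishes_from n d (x : 'rV[int]_n) :=
  forall t : 'I_n, (d <= t)%N -> x ord0 t = 0.

Section Basis.
Variables (n : nat) (S : 'rV[int]_n -> Prop).
Hypothesis S0 : S 0.
Hypothesis S_lin : forall (z : int) x y, S x -> S y -> S (z *: x + y).

Lemma span_vanishing_from d : (d <= n)%N ->
  exists2 b : nat -> 'rV[int]_n, forall j, S (b j) &
    forall x, S x -> vanishes_from d x ->
      exists c : nat -> int, x = \sum_(j < d) c j *: b j.
Proof.
elim: d => [_|d IH lt_dn].
  exists (fun _ => 0) => // x _ x_van; exists (fun _ => 0).
  by rewrite big_ord0; apply/rowP => t; rewrite x_van ?mxE.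
have [b Sb span_b] := IH (ltnW lt_dn).
pose T x := S x /\ vanishes_from d.+1 x.
have T_lin z x y : T x -> T y -> T (z *: x + y).
  move=> [Sx x_van] [Sy y_van]; split; first exact: S_lin.
  by move=> t lt_t; rewrite !mxE x_van ?y_van // mulr0 addr0.
pose j := Ordinal lt_dn.
have T0 : T 0 by split=> // t _; rewrite mxE.
have [x0 [Sx0 x0_van] x0_pivot] := pivot_exists j T_lin T0.
exists (fun s => if s == d then x0 else b s) => [s|x Sx x_van]; first by case: eqP.
pose q := (x ord0 j %/ x0 ord0 j)%Z.
have [Sy y_van] : T (- q *: x0 + x) by apply: T_lin.
have [c y_eq] : exists c : nat -> int, - q *: x0 + x = \sum_(j < d) c j *: b j.
  apply: span_b => // t; rewrite leq_eqVlt => /orP[/eqP dt|lt_dt].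
    have -> : t = j by apply: val_inj; rewrite /= dt.
    by rewrite !mxE mulNr divzK ?addNr //; apply: x0_pivot.
  by rewrite !mxE x_van ?x0_van // mulr0 addr0.
exists (fun s => if s == d then q else c s).
rewrite big_ord_recr /= eqxx -[x](addNKr (q *: x0)) -scaleNr y_eq addrC.
by congr (_ + _); apply: eq_bigr => i _; rewrite (ltn_eqF (ltn_ord i)).
Qed.

Lemma int_row_submodule_basis :
  exists2 b : 'I_n -> 'rV[int]_n, forall j, S (b j) &
    forall x, S x -> exists c : 'I_n -> int, x = \sum_j c j *: b j.
Proof.
have [b Sb span_b] := span_vanishing_from (leqnn n).
exists (fun j => b j) => // x Sx.
have [|c ->] := span_b x Sx; first by move=> t; rewrite leqNgt ltn_ord.
by exists (fun j => c j).
Qed.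

End Basis.

Lemma spline_generators_exist m a i n (E : 'I_n -> 'I_n -> bool) :
  exists g : 'I_n -> 'I_n -> int, generates m a i E g.
Proof.
pose S (x : 'rV[int]_n) := is_spline m a i E (fun v => x ord0 v).
have S0 : S 0 by move=> u v _ _; exists 0; rewrite !mxE mul0r !subr0 dvdz0.
have S_lin z x y : S x -> S y -> S (z *: x + y).
  move=> Sx Sy u v uv e; have [cx x_dvd] := Sx u v uv e; have [cy y_dvd] := Sy u v uv e.
  exists (z * cx + cy); rewrite !mxE; set A := (a ^ _)%:Z.
  have -> : z * x ord0 u + y ord0 u - (z * x ord0 v + y ord0 v) - (z * cx + cy) * A
          = z * (x ord0 u - x ord0 v - cx * A) + (y ord0 u - y ord0 v - cy * A) by ring.
  by rewrite rpredD ?dvdz_mull.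
have [b Sb span_b] := int_row_submodule_basis S0 S_lin.
exists (fun j v => b j ord0 v); split=> [//|f f_spl].
have [|c f_eq] := span_b (\row_v f v); first by move=> u v uv e; rewrite !mxE; exact: f_spl.
exists c => v; have /rowP/(_ v) := f_eq; rewrite mxE summxE => ->.
by under eq_bigr do rewrite mxE; rewrite subrr dvdz0.
Qed.

Lemma det_1_sub_scale_neq0 n a (H : 'M[int]_n) :
  (1 < a)%N -> \det (1%:M - a%:Z *: H) != 0.
Proof.
move=> a_gt1.
have : map_mx (intr : int -> 'Z_a) (1%:M - a%:Z *: H) = 1%:M.
  apply/matrixP => u v; rewrite !mxE rmorphB rmorphM /= rmorph_nat.
  have a_eq0 : a%:~R = 0 :> 'Z_a by exact: pchar_Zp.
  by rewrite a_eq0 mul0r subr0.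
move=> /(congr1 determinant); rewrite det_map_mx det1.
by apply: contraPneq => ->; rewrite rmorph0 => /eqP; rewrite eq_sym oner_eq0.
Qed.

Lemma leq_of_det_mulmx_neq0 n k (C : 'M[int]_(n, k)) (G : 'M[int]_(k, n)) :
  \det (C *m G) != 0 -> (n <= k)%N.
Proof.
move=> detCG_neq0.
have : map_mx (intr : int -> rat) (C *m G) \in unitmx.
  by rewrite unitmxE det_map_mx unitfE intr_eq0.
rewrite map_mxM => /mxrank_unit <-.
exact: leq_trans (mxrankM_maxl _ _) (rank_leq_col _).
Qed.

Lemma spline_of_label_dvd m a i n (E : 'I_n -> 'I_n -> bool) (f : 'I_n -> int) :
  (forall u v : 'I_n, (u < v)%N -> ((a ^ i (edge_index u v))%:Z %| f u - f v)%Z) ->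
  is_spline m a i E f.
Proof.
move=> f_dvd u v uv _; exists ((f u - f v) %/ (a ^ i (edge_index u v))%:Z)%Z.
by rewrite divzK ?f_dvd // subrr dvdz0.
Qed.

Lemma generates_size_ge m a i n (E : 'I_n -> 'I_n -> bool) k
    (g : 'I_k -> 'I_n -> int) :
  (1 < a)%N -> (0 < m)%N -> (a %| m)%N ->
  (forall u v : 'I_n, (u < v)%N -> (a ^ (i (edge_index u v)).+1 %| m)%N) ->
  generates m a i E g -> (n <= k)%N.
Proof.
move=> a_gt1 m_gt0 a_dvd_m label_dvd [_ g_gen].
pose M := (m %/ a)%N.
have m_eq : m = (M * a)%N by rewrite divnK.
have M_gt0 : (0 < M)%N by rewrite divn_gt0 ?(ltnW a_gt1) // dvdn_leq.
have coef v : exists c : 'I_k -> int, forall w,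
    (m%:Z %| M%:Z * (v == w)%:R - \sum_j c j * g j w)%Z.
  apply: g_gen; apply: spline_of_label_dvd => u w uw.
  rewrite -mulrBr dvdz_mulr // dvdzE /= -(dvdn_pmul2r (ltnW a_gt1)) -expnSr -m_eq.
  exact: label_dvd.
have [c c_dvd] := fin_all_exists coef.
pose H := \matrix_(v, w) ((M%:Z * (v == w)%:R - \sum_j c v j * g j w) %/ m%:Z)%Z.
apply: (@leq_of_det_mulmx_neq0 _ _ (\matrix_(v, j) c v j) (\matrix_(j, w) g j w)).
have -> : \matrix_(v, j) c v j *m \matrix_(j, w) g j w = M%:Z *: (1%:M - a%:Z *: H).
  apply/matrixP => v w; rewrite !mxE; under eq_bigr do rewrite !mxE.
  have := divzK (c_dvd v w); rewrite m_eq PoszM.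
  set D := _ - _; set h := (D %/ _)%Z => D_eq.
  by rewrite -[LHS](subKr (M%:Z * (v == w)%:R)) -/D -D_eq; ring.
by rewrite detZ mulf_neq0 ?expf_neq0 ?det_1_sub_scale_neq0 // eqz_nat -lt0n.
Qed.

Local Close Scope ring_scope.

Lemma r_bin2 v : r v = 'C(v, 2).
Proof. by rewrite /r bin2 subn1 divn2. Qed.

Lemma edge_index_range u v n : u < v -> v < n -> 0 < edge_index u v <= r n.
Proof.
move=> lt_uv lt_vn; rewrite /edge_index addn1 ltn0Sn /= !r_bin2.
apply: leq_trans (leq_bin2l _ lt_vn); rewrite binS bin1 -addnS leq_add2l.
exact: lt_uv.
Qed.

Section DvdnChain.
Variables (f : nat -> nat) (lo hi : nat).

Let interval_convex :
  {in [pred s | lo <= s <= hi] &, forall s t u, s < u < t -> u \in [pred s | lo <= s <= hi]}.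
Proof.
move=> s t /andP[lo_s _] /andP[_ t_hi] u /andP[lt_su lt_ut].
by rewrite inE (leq_trans lo_s (ltnW lt_su)) (leq_trans (ltnW lt_ut) t_hi).
Qed.

Lemma dvdn_chain_head : (forall s, lo <= s -> s < hi -> f s.+1 %| f s) ->
  forall s, lo <= s <= hi -> f s %| f lo.
Proof.
move=> f_dvd s /andP[lo_s s_hi].
apply: (@homo_leq_in _ _ f (fun x y => y %| x) dvdnn _ interval_convex) => //.
- by move=> y x z xy yz; apply: dvdn_trans yz xy.
- by move=> t /andP[lo_t _] /andP[_ t_hi]; apply: f_dvd.
- by rewrite inE leqnn (leq_trans lo_s s_hi).
- by rewrite inE lo_s s_hi.
Qed.

Lemma dvdn_chain_tail : (forall s, lo <= s -> s < hi -> f s %| f s.+1) ->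
  forall s, lo <= s <= hi -> f s %| f hi.
Proof.
move=> f_dvd s /andP[lo_s s_hi].
apply: (@homo_leq_in _ _ f dvdn dvdnn _ interval_convex) => //.
- by move=> y x z; apply: dvdn_trans.
- by move=> t /andP[lo_t _] /andP[_ t_hi]; apply: f_dvd.
- by rewrite inE lo_s s_hi.
- by rewrite inE leqnn (leq_trans lo_s s_hi).
Qed.

End DvdnChain.

Lemma zero_divisor_mod_gt0 m a : 0 < a -> zero_divisor_mod m a -> 0 < m.
Proof.
move=> a_gt0 [_ [b [b_nz ab_0]]]; rewrite lt0n; apply: contraNneq b_nz => m_0.
by move: ab_0; rewrite m_0 !modn0 => /eqP; rewrite muln_eq0 gtn_eqF.
Qed.

Theorem mainTheorem6 (m a k n : nat) (i : nat -> nat) :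
  (1 < a)%N ->
  zero_divisor_mod m a ->
  (1 <= k)%N ->
  (a ^ k %| m)%N ->
  ( ((forall s, (1 <= s)%N -> (s < r n)%N -> (a ^ i s.+1 %| a ^ i s)%N) /\
     (a ^ i 1 %| a ^ k)%N /\ (1 <= i (r n))%N /\ (i 1 < k)%N)
  \/
    ((forall s, (1 <= s)%N -> (s < r n)%N -> (a ^ i s %| a ^ i s.+1)%N) /\
     (a ^ i (r n) %| a ^ k)%N /\ (1 <= i 1)%N /\ (i (r n) < k)%N) ) ->
  forall E : 'I_n -> 'I_n -> bool,
    connected_subgraph E ->
    spline_rank_is m a i E n.
Proof.
move=> a_gt1 zero_div k_gt0 ak_dvd_m label_chain E _.
have m_gt0 := zero_divisor_mod_gt0 (ltnW a_gt1) zero_div.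
have a_dvd_m : a %| m := dvdn_trans (dvdn_exp k_gt0 (dvdnn a)) ak_dvd_m.
have exponent_lt s : 0 < s <= r n -> i s < k.
  case: label_chain => [[dec [_ [_ lt_k]]] | [inc [_ [_ lt_k]]]] s_range.
  - apply: leq_ltn_trans lt_k; rewrite -(dvdn_Pexp2l _ _ a_gt1).
    exact: (dvdn_chain_head (f := fun s => a ^ i s) dec s_range).
  - apply: leq_ltn_trans lt_k; rewrite -(dvdn_Pexp2l _ _ a_gt1).
    exact: (dvdn_chain_tail (f := fun s => a ^ i s) inc s_range).
split=> [|k' g]; first exact: spline_generators_exist.
apply: generates_size_ge => // u v lt_uv.
apply: dvdn_trans ak_dvd_m; rewrite dvdn_exp2l // exponent_lt //.
exact: edge_index_range lt_uv (ltn_ord v).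
Qed.
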